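(* Let $G$ be an abelian group with nontrivial torsion subgroup, let $p=p(G)$, and let $A\subseteq G$ with $|A|<\lceil \log_2 p\rceil$. Then there exists a total ordering $\preceq$ of $A$ that is compatible with the group structure of $G$.
   Context: $p(G)$ denotes the smallest cardinality of a nonzero subgroup of $G$. A total order $\preceq$ on $A\subseteq G$ is compatible with the group structure if for all $a,b,c\in A$, $a\preceq b$ implies $a+c\preceq b+c$. *)

From HB Require Import structures.
From mathcomp Require Import all_boot all_order all_algebra.
Set Implicit Arguments. Unset Strict Implicit. Unset Printing Implicit Defensive.
Import GRing.Theory.
Local Open Scope ring_scope.

Definition is_subgroup (G : zmodType) (H : G -> Prop) : Prop :=
  H 0 /\ (forall x y, H x -> H y -> H (x - y)).

Definition is_nonzero (G : zmodType) (H : G -> Prop) : Prop :=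
  exists x, H x /\ x != 0.

Definition has_card (G : zmodType) (H : G -> Prop) (n : nat) : Prop :=
  exists s : seq G, uniq s /\ (forall x, H x <-> x \in s) /\ size s = n.

Definition nontrivial_torsion (G : zmodType) : Prop :=
  exists x : G, x != 0 /\ exists n : nat, (0 < n)%N /\ x *+ n = 0.

(* p = p(G): the smallest cardinality of a nonzero subgroup of G
   (infinite subgroups have infinite cardinality, hence never the minimum
   when a finite nonzero subgroup exists). *)
Definition is_pG (G : zmodType) (p : nat) : Prop :=
  (exists H : G -> Prop, is_subgroup H /\ is_nonzero H /\ has_card H p) /\
  (forall (H : G -> Prop) (n : nat),
      is_subgroup H -> is_nonzero H -> has_card H n -> (p <= n)%N).

Definition total_order_on (G : zmodType) (A : G -> Prop) (le : G -> G -> Prop) : Prop :=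
  (forall a, A a -> le a a) /\
  (forall a b, A a -> A b -> le a b -> le b a -> a = b) /\
  (forall a b c, A a -> A b -> A c -> le a b -> le b c -> le a c) /\
  (forall a b, A a -> A b -> le a b \/ le b a).

(* le is compatible with the group structure on A:
   for a b c in A, a <= b implies a + c <= b + c (whenever these sums lie in A,
   so that the comparison makes sense for an order on A). *)
Definition compatible_on (G : zmodType) (A : G -> Prop) (le : G -> G -> Prop) : Prop :=
  forall a b c, A a -> A b -> A c -> A (a + c) -> A (b + c) ->
    le a b -> le (a + c) (b + c).

From HB Require Import structures.
From mathcomp Require Import all_boot all_order all_algebra.
From mathcomp Require Import zify.
Set Implicit Arguments. Unset Strict Implicit. Unset Printing Implicit Defensive.
Import Order.TTheory GRing.Theory Num.Theory.
Local Open Scope ring_scope.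

(* Enumerate A as a_1, ..., a_k and let M be the integer matrix whose rows are
   e_i + e_j - e_l, one for each relation a_i + a_j = a_l holding in A.  If
   e_i - e_j (i <> j) were in the rational row space of M, Cramer's rule for a
   nonsingular maximal square submatrix C of M would give an integer identity
   det C * (e_i - e_j) = z M, and evaluating at the a's would give
   det C * (a_i - a_j) = 0.  Every row of C is the sum of two rows having at
   most one entry 1 and one entry -1; matrices with such rows have determinant
   in {-1, 0, 1}, so multilinearity gives |det C| <= 2^k < p(G).  Then a_i - a_j
   would be a nonzero element of order less than p(G), which is impossible.
   Hence the rows of a kernel matrix K of M separate the a_i and turn each
   relation a_i + a_j = a_l into an identity of vectors in Q^k, and the
   lexicographic order of Q^k pulls back to a compatible order on A. *)

Definition multiples (G : zmodType) (g : G) (m : nat) : seq G :=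
  [seq g *+ i | i <- iota 0 m].

Section CyclicSubgroup.
Variables (G : zmodType) (g : G) (m : nat).
Hypotheses (m_gt0 : (0 < m)%N) (gm0 : g *+ m = 0).
Hypothesis m_min : forall n, (0 < n)%N -> g *+ n = 0 -> (m <= n)%N.

Lemma mem_multiples n : g *+ n \in multiples g m.
Proof.
rewrite {1}(divn_eq n m) mulrnDr mulnC mulrnA gm0 mul0rn add0r.
by apply: map_f; rewrite mem_iota add0n ltn_pmod.
Qed.

Lemma multiples_subgroup : is_subgroup (fun x => x \in multiples g m).
Proof.
split; first by rewrite -(mulr0n g) mem_multiples.
move=> _ _ /mapP[i _ ->] /mapP[j _ ->].
have -> : - (g *+ j) = g *+ (m * j - j).
  apply/eqP; rewrite eq_sym -subr_eq0 opprK -mulrnDr subnK ?leq_pmull //.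
  by rewrite mulrnA gm0 mul0rn.
by rewrite -mulrnDr mem_multiples.
Qed.

Lemma multiples_uniq : uniq (multiples g m).
Proof.
rewrite map_inj_in_uniq ?iota_uniq // => i j; rewrite !mem_iota !add0n.
move=> /andP[_ im] /andP[_ jm].
wlog le_ij : i j im jm / (i <= j)%N => [wlog_ij eq_ij|].
  by case: (leqP i j) => [|/ltnW] le; [|apply/esym]; apply: wlog_ij.
move=> /eqP; rewrite eq_sym -subr_eq0 -mulrnBr // => /eqP gji.
apply/eqP; rewrite eqn_leq le_ij leqNgt; apply/negP => lt_ij.
by have := m_min _ gji; rewrite subn_gt0 lt_ij => /(_ isT); lia.
Qed.

End CyclicSubgroup.

Lemma pG_leq_of_mulrn_eq0 (G : zmodType) p (g : G) N :
  is_pG G p -> g != 0 -> (0 < N)%N -> g *+ N = 0 -> (p <= N)%N.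
Proof.
move=> [_ pG_min] g_neq0 N_gt0 gN0.
have ex_m : exists m, (0 < m)%N && (g *+ m == 0) by exists N; rewrite N_gt0 gN0 eqxx.
case: (ex_minnP ex_m) => m /andP[m_gt0 /eqP gm0] m_min.
have {}m_min n : (0 < n)%N -> g *+ n = 0 -> (m <= n)%N.
  by move=> n_gt0 gn0; apply: m_min; rewrite n_gt0 gn0 eqxx.
apply: leq_trans (m_min _ N_gt0 gN0).
apply: (pG_min (fun x => x \in multiples g m)).
- exact: multiples_subgroup.
- by exists g; rewrite -{1}(mulr1n g) mem_multiples.
- by exists (multiples g m); rewrite multiples_uniq // size_map size_iota.
Qed.

Lemma lexi_addr (R : numDomainType) (I : Type) (e : seq I) (u v w : I -> R) :
  (map u e <= map v e :> seqlexi R)%O ->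
  (map (u \+ w) e <= map (v \+ w) e :> seqlexi R)%O.
Proof.
elim: e => //= x e IH; rewrite !lexi_cons !lerD2r.
by case: (u x <= v x) => //= /implyP le_e; apply/implyP => /le_e /IH.
Qed.

Section CompatibleOrder.
Variables (G : zmodType) (A : G -> Prop) (R : realDomainType) (n : nat).
Variable phi : G -> 'rV[R]_n.
Hypothesis phi_inj : forall x y, A x -> A y -> phi x = phi y -> x = y.
Hypothesis phiD : forall x y, A x -> A y -> A (x + y) -> phi (x + y) = phi x + phi y.

Let lex (x : G) : seqlexi R := [seq phi x 0 t | t <- enum 'I_n].

Lemma compatible_order_of_embedding :
  exists le : G -> G -> Prop, total_order_on A le /\ compatible_on A le.
Proof.
exists (fun x y => (lex x <= lex y)%O); split; [split; [|split; [|split]]|].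
- by move=> x _; apply: lexx.
- move=> x y Ax Ay le_xy le_yx; apply: phi_inj => //; apply/rowP => t.
  have /eq_in_map/(_ t) := le_anti (andb_true_intro (conj le_xy le_yx)).
  by rewrite mem_enum; apply.
- by move=> x y z _ _ _; apply: le_trans.
- by move=> x y _ _; apply/orP/le_total.
- move=> x y z Ax Ay Az Axz Ayz; rewrite /lex !phiD //.
  by move=> /(lexi_addr (phi z 0)); congr (_ <= _)%O; apply: eq_map => t; rewrite !mxE.
Qed.

End CompatibleOrder.

Section IncidenceRows.
Variable R : numDomainType.

Definition odelta n (o : option 'I_n) : 'rV[R]_n :=
  if o is Some j then delta_mx 0 j else 0.

Definition incidence_row n (v : 'rV[R]_n) :=
  exists oa oc, v = odelta oa - odelta oc.

Definition incidence2_row n (v : 'rV[R]_n) :=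
  exists v1 v2, [/\ incidence_row v1, incidence_row v2 & v = v1 + v2].

Definition incidence_mx m n (A : 'M[R]_(m, n)) := forall i, incidence_row (row i A).

Definition incidence2_mx m n (A : 'M[R]_(m, n)) := forall i, incidence2_row (row i A).

Lemma colsub_odelta m n (g : 'I_m -> 'I_n) o : injective g ->
  colsub g (odelta o) = odelta (obind (fun j => [pick t | g t == j]) o).
Proof.
move=> g_inj; case: o => [j|] /=; last by rewrite linear0.
case: pickP => [t /eqP <-|no_t]; apply/rowP => s; rewrite !mxE /=.
  by rewrite (inj_eq g_inj).
by rewrite no_t.
Qed.

Lemma sum_odelta n (o : option 'I_n) : \sum_t odelta o 0 t = (o != None)%:R.
Proof.
case: o => [j|] /=; last by rewrite big1 // => t; rewrite mxE.
by rewrite (bigD1 j) //= big1 => [|t /negPf ne_tj]; rewrite !mxE ?eqxx ?ne_tj ?addr0.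
Qed.

Lemma incidence_row_colsub m n (g : 'I_m -> 'I_n) (v : 'rV[R]_n) :
  injective g -> incidence_row v -> incidence_row (colsub g v).
Proof.
by move=> g_inj [oa [oc ->]]; rewrite linearB /= !colsub_odelta //; do 2!eexists.
Qed.

Lemma incidence2_row_colsub m n (g : 'I_m -> 'I_n) (v : 'rV[R]_n) :
  injective g -> incidence2_row v -> incidence2_row (colsub g v).
Proof.
move=> g_inj [v1 [v2 [inc1 inc2 ->]]]; rewrite linearD /=.
by exists (colsub g v1), (colsub g v2); split; try apply: incidence_row_colsub.
Qed.

Lemma row_mxsub_colsub m1 m2 n1 n2 (f : 'I_m2 -> 'I_m1) (g : 'I_n2 -> 'I_n1)
    (A : 'M[R]_(m1, n1)) i :
  row i (mxsub f g A) = colsub g (row (f i) A).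
Proof. by apply/rowP => t; rewrite !mxE. Qed.

Lemma incidence_mxsub m1 m2 n1 n2 (f : 'I_m2 -> 'I_m1) (g : 'I_n2 -> 'I_n1) A :
  injective g -> incidence_mx A -> incidence_mx (mxsub f g A).
Proof.
by move=> g_inj incA i; rewrite row_mxsub_colsub; apply: incidence_row_colsub.
Qed.

Lemma incidence2_mxsub m1 m2 n1 n2 (f : 'I_m2 -> 'I_m1) (g : 'I_n2 -> 'I_n1) A :
  injective g -> incidence2_mx A -> incidence2_mx (mxsub f g A).
Proof.
by move=> g_inj incA i; rewrite row_mxsub_colsub; apply: incidence2_row_colsub.
Qed.

Lemma incidence_rowP n (v : 'rV[R]_n) : incidence_row v ->
  \sum_t v 0 t = 0 \/ exists e j, `|e| = 1 /\ v = e *: delta_mx 0 j.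
Proof.
move=> [[a|] [[c|] ->]]; [left | right | right | left].
- rewrite (_ : \sum_t _ = \sum_t odelta (Some a) 0 t - \sum_t odelta (Some c) 0 t).
    by rewrite !sum_odelta subrr.
  by rewrite -sumrB; apply: eq_bigr => t _; rewrite !mxE.
- by exists 1, a; rewrite normr1 subr0 scale1r.
- by exists (-1), c; rewrite normrN normr1 sub0r scaleN1r.
- by rewrite subrr big1 // => t; rewrite mxE.
Qed.

End IncidenceRows.

Arguments odelta {R n} o.

Lemma det_row_delta (R : comPzRingType) n (A : 'M[R]_n) i j e :
  row i A = e *: delta_mx 0 j -> \det A = e * cofactor A i j.
Proof.
move=> rowA; rewrite (expand_det_row _ i) (bigD1 j) //= big1 ?addr0 => [|t ne_tj].
  by have /rowP/(_ j) := rowA; rewrite !mxE !eqxx mulr1 => ->.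
have /rowP/(_ t) := rowA; rewrite !mxE (negPf ne_tj) andbF mulr0 => ->.
exact: mul0r.
Qed.

Lemma det_row_sums0 (R : comPzRingType) n (A : 'M[R]_n.+1) :
  (forall i, \sum_j A i j = 0) -> \det A = 0.
Proof.
move=> sumA0; pose ones : 'cV[R]_n.+1 := const_mx 1.
have A_ones : A *m ones = 0.
  apply/matrixP => i k; rewrite !mxE -[RHS](sumA0 i).
  by apply: eq_bigr => j _; rewrite mxE mulr1.
have /matrixP/(_ ord0 ord0) : (\det A)%:M *m ones = 0.
  by rewrite -mul_adj_mx -mulmxA A_ones mulmx0.
by rewrite mul_scalar_mx !mxE mulr1.
Qed.

Lemma det_incidence (R : numDomainType) n (A : 'M[R]_n) :
  incidence_mx A -> `|\det A| <= 1.
Proof.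
elim: n A => [|n IHn] A incA; first by rewrite det_mx00 normr1.
have [i sum_i_neq0 | sums0] := pickP (fun i => \sum_j A i j != 0); last first.
  by rewrite det_row_sums0 ?normr0 // => i; apply/eqP/negbFE/sums0.
have rowsum : \sum_t row i A 0 t = \sum_j A i j by apply: eq_bigr => t _; rewrite mxE.
have [sum0|[e [j [e1 rowA]]]] := incidence_rowP (incA i).
  by move: sum_i_neq0; rewrite -rowsum sum0 eqxx.
rewrite (det_row_delta rowA) /cofactor !normrM normrX normrN1 expr1n e1 !mul1r.
have -> : row' i (col' j A) = mxsub (lift i) (lift j) A.
  by apply/matrixP => ? ?; rewrite !mxE.
exact/IHn/incidence_mxsub/incA/lift_inj.
Qed.

Lemma det_incidence2 (R : numDomainType) n (A : 'M[R]_n) :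
  incidence2_mx A -> `|\det A| <= 2 ^+ n.
Proof.
move=> incA.
suff bound m : (m <= n)%N -> forall B : 'M[R]_n,
    (forall i : 'I_n, (i < m)%N -> incidence2_row (row i B)) ->
    (forall i : 'I_n, (m <= i)%N -> incidence_row (row i B)) -> `|\det B| <= 2 ^+ m.
  by apply: bound => // i; rewrite leqNgt ltn_ord.
elim: m => [_ B _ incB|m IHm lt_mn B inc2B incB].
  by rewrite expr0 det_incidence // => i; apply: incB.
pose i0 := Ordinal lt_mn.
have [v1 [v2 [inc1 inc2 rowB]]] := inc2B i0 (ltnSn m).
pose B_with v := \matrix_i (if i == i0 then v else row i B).
have detB : \det B = \det (B_with v1) + \det (B_with v2).
  rewrite (@determinant_multilinear _ _ B (B_with v1) (B_with v2) i0 1 1) ?mul1r //.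
  rewrite /B_with.
  - by rewrite !rowK !eqxx !scale1r.
  - by apply/matrixP => i t; rewrite !mxE ifN_eqC ?neq_lift // mxE.
  - by apply/matrixP => i t; rewrite !mxE ifN_eqC ?neq_lift // mxE.
have detB_with v : incidence_row v -> `|\det (B_with v)| <= 2 ^+ m.
  move=> inc_v; apply: IHm => [|i lt_im|i le_mi]; first exact: ltnW.
    rewrite /B_with rowK ifN; first exact/inc2B/leqW.
    by apply: contraTneq lt_im => ->; rewrite ltnn.
  rewrite /B_with rowK; case: eqVneq => [_|ne_ii0] //; apply: incB.
  rewrite ltn_neqAle le_mi andbT; move: ne_ii0; apply: contra_neq => eq_mi.
  exact/val_inj/esym.
rewrite detB exprS mulr2n mulrDl mul1r.
exact: le_trans (ler_normD _ _) (lerD (detB_with _ inc1) (detB_with _ inc2)).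
Qed.

Local Notation ratz := (intr : int -> rat).

Lemma int_cramer_rowspace m n (M : 'M[int]_(m, n)) (u : 'rV[int]_n) :
  (map_mx ratz u <= map_mx ratz M)%MS ->
  exists r (f : 'I_r -> 'I_m) (g : 'I_r -> 'I_n) (z : 'rV[int]_r),
    [/\ injective g, \det (mxsub f g M) != 0
      & \det (mxsub f g M) *: u = z *m rowsub f M].
Proof.
move=> u_sub; set MQ := map_mx ratz M.
pose f := maxrankfun MQ; pose B := rowsub f MQ.
have BT_full : row_full B^T by rewrite /row_full mxrank_tr; exact: maxrowsub_free.
pose g := fullrankfun BT_full; pose C := mxsub f g M.
have CQ : map_mx ratz C = (rowsub g B^T)^T by apply/matrixP => a b; rewrite !mxE.
have detCQ : \det (map_mx ratz C) != 0.
  by rewrite CQ det_tr -unitfE -unitmxE fullrowsub_unit.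
have [w uw] : exists w, map_mx ratz u = w *m B by apply/submxP; rewrite eq_maxrowsub.
exists _, f, g, (colsub g u *m \adj C); split.
- exact: fullrankfun_inj.
- by apply: contra detCQ => /eqP detC0; rewrite det_map_mx detC0 rmorph0.
have BQ : map_mx ratz (rowsub f M) = B by apply/matrixP => a b; rewrite !mxE.
have uCQ : map_mx ratz (colsub g u) = w *m map_mx ratz C.
  by rewrite CQ trmx_mxsub trmxK mulmx_colsub -uw; apply/matrixP => a b; rewrite !mxE.
suff /matrixP eqQ :
    map_mx ratz (\det C *: u) = map_mx ratz (colsub g u *m \adj C *m rowsub f M).
  by apply/matrixP => a b; have := eqQ a b; rewrite !mxE => /intr_inj.
rewrite map_mxZ !map_mxM map_mx_adj BQ uCQ -(mulmxA w) mul_mx_adj mul_mx_scalar.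
by rewrite -scalemxAl -uw det_map_mx.
Qed.

Definition eval_row (G : zmodType) k (a : 'I_k -> G) (v : 'rV[int]_k) : G :=
  \sum_t a t *~ v 0 t.

Fact eval_row_is_zmod_morphism (G : zmodType) k (a : 'I_k -> G) :
  zmod_morphism (eval_row a).
Proof. by move=> u v; rewrite -sumrB; apply: eq_bigr => t _; rewrite !mxE mulrzBr. Qed.

HB.instance Definition _ (G : zmodType) k (a : 'I_k -> G) :=
  GRing.isZmodMorphism.Build _ _ (eval_row a) (eval_row_is_zmod_morphism a).

Section Relations.
Variables (G : zmodType) (k : nat) (a : 'I_k -> G).

Lemma eval_row_delta j : eval_row a (delta_mx 0 j) = a j.
Proof.
rewrite /eval_row (bigD1 j) //= big1 => [|t /negPf ne_tj]; rewrite mxE ?eqxx ?ne_tj //.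
by rewrite addr0.
Qed.

Lemma eval_rowZ d v : eval_row a (d *: v) = eval_row a v *~ d.
Proof. by rewrite -raddfMz -scaler_int intz. Qed.

Lemma eval_row_mulmx m (z : 'rV[int]_m) (B : 'M[int]_(m, k)) :
  eval_row a (z *m B) = \sum_i eval_row a (row i B) *~ z 0 i.
Proof.
by rewrite mulmx_sum_row raddf_sum; apply: eq_bigr => i _; rewrite /= eval_rowZ.
Qed.

Definition relation_row (t : 'I_k * 'I_k * 'I_k) : 'rV[int]_k :=
  let: (i, j, l) := t in
  if a i + a j == a l then delta_mx 0 i + delta_mx 0 j - delta_mx 0 l else 0.

Definition relation_mx :=
  \matrix_(r < #|{: 'I_k * 'I_k * 'I_k}|) relation_row (enum_val r).

Lemma eval_relation_row t : eval_row a (relation_row t) = 0.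
Proof.
case: t => [[i j] l] /=; case: eqP => [rel|_]; last exact: raddf0.
by rewrite raddfB raddfD /= !eval_row_delta rel subrr.
Qed.

Lemma incidence2_relation_mx : incidence2_mx relation_mx.
Proof.
move=> r; rewrite rowK; case: (enum_val r) => [[i j] l] /=; case: eqP => _.
  exists (odelta (Some i) - odelta (Some l)), (odelta (Some j) - odelta None).
  by split; [do 2!eexists | do 2!eexists | rewrite /= subr0 addrAC].
have inc0 : incidence_row (0 : 'rV[int]_k) by exists None, None; rewrite subrr.
by exists 0, 0; rewrite addr0.
Qed.

End Relations.

Lemma delta_sub_notin_relations (G : zmodType) p k (a : 'I_k -> G) i j :
  is_pG G p -> (2 ^ k < p)%N -> injective a -> i != j ->
  ~~ (map_mx ratz (delta_mx 0 i - delta_mx 0 j : 'rV_k)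
        <= map_mx ratz (relation_mx a))%MS.
Proof.
move=> pG lt_2k_p a_inj ne_ij; apply/negP => /int_cramer_rowspace[r [f [g [z]]]].
set d := \det _ => -[g_inj d_neq0 cramer].
have tors : (a i - a j) *~ d = 0.
  have := congr1 (eval_row a) cramer; rewrite eval_rowZ raddfB /= !eval_row_delta => ->.
  rewrite eval_row_mulmx big1 // => t _.
  by rewrite row_rowsub rowK eval_relation_row mul0rz.
have le_rk : (r <= k)%N by have := leq_card g g_inj; rewrite !card_ord.
have d_le : (`|d|%N <= 2 ^ k)%N.
  have := det_incidence2 (incidence2_mxsub f g_inj (incidence2_relation_mx a)).
  rewrite -/d -abszE -natrX natz lez_nat => /leq_trans; apply.
  by apply: leq_pexp2l.
have tors_abs : (a i - a j) *+ `|d|%N = 0.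
  by rewrite pmulrn abszEsg mulrC mulrzA tors mul0rz.
have ai_neq_aj : a i - a j != 0 by rewrite subr_eq0 (inj_eq a_inj).
have := pG_leq_of_mulrn_eq0 pG ai_neq_aj _ tors_abs.
rewrite absz_gt0 => /(_ d_neq0) le_pd.
by have := leq_trans le_pd d_le; rewrite leqNgt lt_2k_p.
Qed.

Lemma relation_embedding (G : zmodType) k (a : 'I_k -> G) :
  injective a ->
  (forall i j, i != j ->
     ~~ (map_mx ratz (delta_mx 0 i - delta_mx 0 j : 'rV_k)
           <= map_mx ratz (relation_mx a))%MS) ->
  exists phi : G -> 'rV[rat]_k,
    (forall i j, phi (a i) = phi (a j) -> i = j) /\
    (forall i j l, a i + a j = a l -> phi (a l) = phi (a i) + phi (a j)).
Proof.
move=> a_inj notin; set M := map_mx ratz (relation_mx a); pose K := cokermx M.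
pose phi x := oapp (fun i => row i K) 0 [pick i | a i == x].
have phiE i : phi (a i) = row i K.
  by rewrite /phi; case: pickP => [i' /eqP/a_inj -> | /(_ i)]; rewrite ?eqxx.
exists phi; split => [i j | i j l rel]; rewrite !phiE.
  move=> eq_ij; apply/eqP; apply: contraT => /notin; rewrite submxE.
  by rewrite raddfB /= !map_delta_mx mulmxBl -!rowE eq_ij subrr eqxx.
have := congr1 (row (enum_rank (i, j, l))) (mulmx_coker M).
rewrite row_mul row0 -map_row rowK enum_rankK /= rel eqxx.
rewrite raddfB raddfD /= !map_delta_mx mulmxBl mulmxDl -!rowE => /eqP.
by rewrite subr_eq0 => /eqP.
Qed.

Lemma has_card_enum (G : zmodType) (A : G -> Prop) k : has_card A k ->
  exists a : 'I_k -> G, injective a /\ forall x, A x <-> exists i, x = a i.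
Proof.
move=> [s [s_uniq [memA size_s]]]; exists (fun i => nth 0 s i); split.
  by move=> i j /eqP; rewrite nth_uniq ?size_s // => /eqP/val_inj.
move=> x; rewrite memA; split => [x_s | [i ->]]; last by rewrite mem_nth ?size_s.
have lt_xk : (index x s < k)%N by rewrite -size_s index_mem.
by exists (Ordinal lt_xk); rewrite /= nth_index.
Qed.

Theorem lemma3p10 (G : zmodType) (p : nat) (A : G -> Prop) (k : nat) :
  nontrivial_torsion G -> is_pG G p ->
  has_card A k -> (k < up_log 2 p)%N ->
  exists le : G -> G -> Prop, total_order_on A le /\ compatible_on A le.
Proof.
(* Nontrivial torsion is already implied by [is_pG G p]. *)
move=> _ pG /has_card_enum[a [a_inj memA]] lt_k_log.
have lt_2k_p : (2 ^ k < p)%N.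
  rewrite ltnNge; apply: contraTN lt_k_log => le_p_2k.
  by rewrite -leqNgt up_log_min.
have [phi [phi_inj phiD]] :=
  relation_embedding a_inj (fun i j => delta_sub_notin_relations pG lt_2k_p a_inj).
apply: (compatible_order_of_embedding (phi := phi)) => x y /memA[i ->] /memA[j ->].
  by move=> /phi_inj ->.
by move=> /memA[l rel]; rewrite rel (phiD _ _ _ rel).
Qed.
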